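(* Let $(X,\tau)$ be a fuzzifying topological space such that $\tau_P(A\cap B)\ge\min(\tau_P(A),\tau_P(B))$ for all $A,B\subseteq X$, and let $A\subseteq X$. Then $$\max\Big(0,\ T_2^P(X,\tau)+L_PC(A,\tau/A)+\inf_{x\in X}Cl_P(A)(x)-2\Big)\le\tau_P(A),$$ i.e. $\vDash T_2^P(X,\tau)\otimes L_PC(A,\tau/A)\otimes(Cl_P(A)\equiv X)\to A\in\tau_P$.
   Context: Łukasiewicz semantics: $[\varphi\otimes\psi]=\max(0,[\varphi]+[\psi]-1)$, $[\varphi\to\psi]=\min(1,1-[\varphi]+[\psi])$; $[Cl_P(A)\equiv X]=\inf_{x\in X}Cl_P(A)(x)$. A fuzzifying topology on $X$ is $\tau:P(X)\to[0,1]$ with $\tau(X)=1$, $\tau(A\cap B)\ge\min(\tau(A),\tau(B))$, $\tau(\bigcup A_\lambda)\ge\inf\tau(A_\lambda)$. $N_x(A)=\sup_{x\in B\subseteq A}\tau(B)$; $Cl(A)(x)=1-N_x(X\setminus A)$; for $\mu:X\to[0,1]$, $Int(\mu)(x)=\sup_{x\in B}\min(\tau(B),\inf_{y\in B}\mu(y))$. Pre-open degrees $\tau_P(A)=\inf_{x\in A}Int(Cl(A))(x)$; $N^P_x(A)=\sup_{x\in B\subseteq A}\tau_P(B)$; $Cl_P(A)(x)=1-N^P_x(X\setminus A)$. $T_2^P(X,\tau)=\inf_{x\ne y}\sup\{\min(N^P_x(B),N^P_y(C)):B\cap C=\emptyset\}$. For $G\subseteq X$: $(\tau_P/G)(B)=\sup\{\tau_P(V):V\cap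 G=B\}$. Compactness degree of $G$ w.r.t. $\rho:P(G)\to[0,1]$: with $K(\Re,G)=\inf_{x\in G}\sup_{B\ni x}\Re(B)$, $[\Re\subseteq\rho]=\inf_B\min(1,1-\Re(B)+\rho(B))$, $\wp\le\Re$ pointwise, $FF(\wp)=1-\inf\{\delta\in[0,1]:\{B:\wp(B)>\delta\}\text{ finite}\}$, $\Gamma(G,\rho)=\inf_{\Re}\min\big(1,1-\max(0,K(\Re,G)+[\Re\subseteq\rho]-1)+\sup_{\wp\le\Re}\max(0,K(\wp,G)+FF(\wp)-1)\big)$. With $N^{P^A}_x(G)=\sup_{x\in C\subseteq G}(\tau_P/A)(C)$, $L_PC(A,\tau/A)=\inf_{x\in A}\sup_{G\subseteq A}\max(0,N^{P^A}_x(G)+\Gamma(G,\tau_P/G)-1)$. *)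

From mathcomp Require Import all_boot all_order all_algebra.
From mathcomp Require Import all_classical all_reals.
Set Implicit Arguments. Unset Strict Implicit. Unset Printing Implicit Defensive.
Import Order.TTheory GRing.Theory Num.Theory.
Local Open Scope classical_set_scope.
Local Open Scope ring_scope.

Section FuzzDefs.
Variable R : realType.

(* Supremum / infimum of a set of truth values in [0,1], with the
   conventions sup of the empty set = 0 and inf of the empty set = 1. *)
Definition sup01 (S : set R) : R := sup (S `|` [set 0]).
Definition inf01 (S : set R) : R := 1 - sup01 [set 1 - s | s in S].

Definition luk_and (a b : R) : R := Num.max 0 (a + b - 1).
Definition luk_imp (a b : R) : R := Num.min 1 (1 - a + b).

Variable X : Type.

Definition fuzzifying_topology (tau : set X -> R) : Prop :=
  [/\ (forall A, 0 <= tau A <= 1),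
      tau setT = 1,
      (forall A B, Num.min (tau A) (tau B) <= tau (A `&` B)) &
      (forall F : set (set X),
          inf01 [set tau A | A in F] <= tau (\bigcup_(A in F) A))].

Variable tau : set X -> R.

Definition nbh (x : X) (A : set X) : R :=
  sup01 [set tau B | B in [set B | B x /\ B `<=` A]].
Definition fcl (A : set X) (x : X) : R := 1 - nbh x (~` A).
Definition fint (mu : X -> R) (x : X) : R :=
  sup01 [set Num.min (tau B) (inf01 [set mu y | y in B]) | B in [set B | B x]].

Definition tauP (A : set X) : R := inf01 [set fint (fcl A) x | x in A].

Definition nbhP (x : X) (A : set X) : R :=
  sup01 [set tauP B | B in [set B | B x /\ B `<=` A]].
Definition clP (A : set X) (x : X) : R := 1 - nbhP x (~` A).

Definition T2P : R :=
  inf01 [set sup01 [set Num.min (nbhP xy.1 BC.1) (nbhP xy.2 BC.2)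
                     | BC in [set BC : set X * set X | BC.1 `&` BC.2 = set0]]
         | xy in [set xy : X * X | xy.1 <> xy.2]].

Definition tauP_sub (G : set X) (B : set X) : R :=
  sup01 [set tauP V | V in [set V | V `&` G = B]].

(* Compactness degree of G w.r.t. rho : P(G) -> [0,1].  Fuzzy families of
   subsets of G are represented as functions set X -> R, of which only the
   values on subsets of G are ever used. *)
Definition fam01 (G : set X) (Rf : set X -> R) : Prop :=
  forall B, B `<=` G -> 0 <= Rf B <= 1.
Definition Kdeg (Rf : set X -> R) (G : set X) : R :=
  inf01 [set sup01 [set Rf B | B in [set B | B `<=` G /\ B x]] | x in G].
Definition incl_deg (G : set X) (Rf rho : set X -> R) : R :=
  inf01 [set Num.min 1 (1 - Rf B + rho B) | B in [set B | B `<=` G]].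
Definition FF (G : set X) (Pf : set X -> R) : R :=
  1 - inf01 [set d | d in [set d : R | 0 <= d <= 1 /\
                 finite_set [set B | B `<=` G /\ d < Pf B]]].
Definition Gamma (G : set X) (rho : set X -> R) : R :=
  inf01 [set Num.min 1 (1 - luk_and (Kdeg Rf G) (incl_deg G Rf rho)
            + sup01 [set luk_and (Kdeg Pf G) (FF G Pf)
                     | Pf in [set Pf | fam01 G Pf /\
                                       (forall B, B `<=` G -> Pf B <= Rf B)]])
         | Rf in [set Rf | fam01 G Rf]].

Definition nbhPA (A : set X) (x : X) (G : set X) : R :=
  sup01 [set tauP_sub A C | C in [set C | C x /\ C `<=` G]].

Definition LPC (A : set X) : R :=
  inf01 [set sup01 [set luk_and (nbhPA A x G) (Gamma G (tauP_sub G))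
                    | G in [set G | G `<=` A]]
         | x in A].

End FuzzDefs.

From mathcomp Require Import all_boot all_order all_algebra.
From mathcomp Require Import all_classical all_reals.
From mathcomp Require Import lra.
Set Implicit Arguments. Unset Strict Implicit. Unset Printing Implicit Defensive.
Import Order.TTheory GRing.Theory Num.Theory.
Local Open Scope classical_set_scope.
Local Open Scope ring_scope.

(* The separation and compactness degrees never exceed 1.  A pre-dense set is
   pre-open: open sets are pre-open, so the pre-closure of A lies below its
   closure; the open set X, on which Cl(A) is therefore everywhere at least
   the pre-density degree, then bounds Int(Cl(A)) below by that degree. *)

Section SupInf01.
Variable R : realType.
Implicit Types (S : set R) (c s : R).

Lemma sup01_ge0 S : 0 <= sup01 S.
Proof.
rewrite /sup01; have [ubS|noubS] := pselect (has_ubound (S `|` [set 0])).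
  by apply: (ub_le_sup ubS); right.
by rewrite sup_out // => -[].
Qed.

Lemma sup01_le S c : 0 <= c -> (forall s, S s -> s <= c) -> sup01 S <= c.
Proof.
move=> c_ge0 Sc; apply: ge_sup; first by exists 0; right.
by move=> s [/Sc|->].
Qed.

Lemma sup01_ub S c s : (forall t, S t -> t <= c) -> S s -> s <= sup01 S.
Proof.
move=> Sc Ss; apply: ub_le_sup; last by left.
by exists (Num.max c 0) => t [/Sc tc|->]; rewrite le_max ?tc ?lexx ?orbT.
Qed.

Lemma inf01_le1 S : inf01 S <= 1.
Proof. by rewrite /inf01 lerBlDr lerDl sup01_ge0. Qed.

Lemma inf01_ge S c : c <= 1 -> (forall s, S s -> c <= s) -> c <= inf01 S.
Proof.
move=> c_le1 cS; rewrite /inf01 lerBrDr addrC -lerBrDr.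
apply: sup01_le => [|_ [s Ss <-]]; first by rewrite subr_ge0.
by rewrite lerB // cS.
Qed.

Lemma inf01_lb S c s : (forall t, S t -> c <= t) -> S s -> inf01 S <= s.
Proof.
move=> cS Ss; rewrite /inf01 lerBlDr addrC -lerBlDr.
apply: (sup01_ub (c := 1 - c)); last by exists s.
by move=> _ [t St <-]; rewrite lerB // cS.
Qed.

End SupInf01.

Section PreDensity.
Variables (R : realType) (X : Type) (tau : set X -> R).
Hypothesis tau_le1 : forall B, tau B <= 1.

Definition predense_deg (A : set X) : R := inf01 [set clP tau A x | x in [set: X]].

Lemma tauP_le1 (B : set X) : tauP tau B <= 1.
Proof. exact: inf01_le1. Qed.

Lemma nbhP_le1 (x : X) (B : set X) : nbhP tau x B <= 1.
Proof. by apply: sup01_le => // _ [C _ <-]; apply: tauP_le1. Qed.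

Lemma clP_ge0 (A : set X) (x : X) : 0 <= clP tau A x.
Proof. by rewrite subr_ge0 nbhP_le1. Qed.

Lemma predense_deg_ge0 (A : set X) : 0 <= predense_deg A.
Proof. by apply: inf01_ge => // _ [x _ <-]; apply: clP_ge0. Qed.

Lemma fint_ge (mu : X -> R) (B : set X) (x : X) : B x ->
  Num.min (tau B) (inf01 [set mu y | y in B]) <= fint tau mu x.
Proof.
move=> Bx; apply: (sup01_ub (c := 1)); last by exists B.
by move=> _ [C _ <-]; rewrite ge_min tau_le1.
Qed.

Lemma fcl_mem (B : set X) (y : X) : B y -> fcl tau B y = 1.
Proof.
move=> By; rewrite /fcl; suff -> : nbh tau y (~` B) = 0 by rewrite subr0.
apply/eqP; rewrite eq_le sup01_ge0 andbT.
by apply: sup01_le => // s [C [Cy CnB] _]; case: (CnB y Cy).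
Qed.

Lemma tau_le_tauP (B : set X) : tau B <= tauP tau B.
Proof.
apply: inf01_ge => // _ [x Bx <-]; apply: le_trans (fint_ge _ Bx).
have fclB1 : 1 <= inf01 [set fcl tau B y | y in B].
  by apply: inf01_ge => // _ [y By <-]; rewrite fcl_mem.
by rewrite le_min lexx (le_trans (tau_le1 B) fclB1).
Qed.

Lemma nbh_le_nbhP (x : X) (B : set X) : nbh tau x B <= nbhP tau x B.
Proof.
apply: sup01_le => [|_ [C CxB <-]]; first exact: sup01_ge0.
apply: le_trans (tau_le_tauP C) _.
by apply: (sup01_ub (c := 1)); [move=> _ [E _ <-]; apply: tauP_le1 | exists C].
Qed.

Lemma clP_le_fcl (A : set X) (x : X) : clP tau A x <= fcl tau A x.
Proof. by rewrite lerB // nbh_le_nbhP. Qed.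

Hypothesis tauT : tau setT = 1.

Lemma predense_deg_le_tauP (A : set X) : predense_deg A <= tauP tau A.
Proof.
apply: inf01_ge => [|_ [x _ <-]]; first exact: inf01_le1.
apply: le_trans (fint_ge _ (I : setT x)); rewrite tauT le_min inf01_le1 /=.
apply: inf01_ge => [|_ [y _ <-]]; first exact: inf01_le1.
apply: le_trans (clP_le_fcl A y).
by apply: (inf01_lb (c := 0)); [move=> _ [z _ <-]; apply: clP_ge0 | exists y].
Qed.

End PreDensity.

Theorem theorem4p2 (R : realType) (X : Type) (tau : set X -> R)
  (Htop : fuzzifying_topology tau)
  (HP : forall A B : set X,
          Num.min (tauP tau A) (tauP tau B) <= tauP tau (A `&` B))
  (A : set X) :
  Num.max 0 (T2P tau + LPC tau A
               + inf01 [set clP tau A x | x in [set: X]] - 2)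
    <= tauP tau A.
Proof.
case: Htop => tau01 tauT _ _.
have tau_le1 B : tau B <= 1 by case/andP: (tau01 B).
have T2P_le1 : T2P tau <= 1 := inf01_le1 _.
have LPC_le1 : LPC tau A <= 1 := inf01_le1 _.
have D_ge0 := predense_deg_ge0 tau A.
have D_le := predense_deg_le_tauP tau_le1 tauT A.
rewrite /predense_deg in D_ge0 D_le.
rewrite ge_max (le_trans D_ge0 D_le) /=.
lra.
Qed.
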